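(* Let $q\in(0,1)$, $\beta<1$ real, and $t,z\in\mathbb{C}$ with $|t|<|z|<1$. Let $\tau$ satisfy $\alpha(\tau+\tau^{-1})=\beta(z+z^{-1})$. (1) If $\alpha$ is real with $|\alpha|<q$, then \[ \sum_{n=0}^{\infty}\frac{(\beta;q)_n}{(\alpha;q)_n}p_n^{(\alpha,\beta)}(z+z^{-1};q)\,t^n=\frac{1-q^{-1}\alpha}{(1-zt)(1-z^{-1}t)}\,{}_3\phi_2\!\left(q,q\tau t,q\tau^{-1}t;qzt,qz^{-1}t;q,q^{-1}\alpha\right). \] (2) If $\alpha=q$, then \[ \sum_{n=0}^{\infty}\frac{(\beta;q)_n}{(q;q)_n}p_n^{(q,\beta)}(z+z^{-1};q)\,t^n=\frac{(q\tau t,q\tau^{-1}t;q)_\infty}{(zt,z^{-1}t;q)_\infty}. \]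
   Context: $(a;q)_n:=\prod_{j=0}^{n-1}(1-aq^j)$, $n\in\mathbb{N}_0\cup\{\infty\}$, $(a_1,\dots,a_r;q)_n:=\prod_i(a_i;q)_n$. The monic polynomials $p_n^{(\alpha,\beta)}(x;q)$ satisfy $p_{-1}=0$, $p_0=1$, $p_{n+1}(x)=xp_n(x)-\tilde\gamma_{n-1}\tilde\gamma_np_{n-1}(x)$ with $\tilde\gamma_n=(1-\alpha q^n)/(1-\beta q^n)$. ${}_3\phi_2(a_1,a_2,a_3;b_1,b_2;q,w)=\sum_{k\ge0}\frac{(a_1,a_2,a_3;q)_k}{(b_1,b_2,q;q)_k}w^k$. The dependence on $\tau$ is only through $\alpha(\tau+\tau^{-1})=\beta(z+z^{-1})$: e.g. $(q^{-1}\alpha)^k(q\tau t,q\tau^{-1}t;q)_k=\prod_{j=0}^{k-1}\bigl(q^{-1}\alpha(1+q^{2j+2}t^2)-q^jt\beta(z+z^{-1})\bigr)$, which also defines it for $\alpha=0$. *)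

From Stdlib Require Import Reals.
From Coquelicot Require Import Coquelicot.
Open Scope R_scope.

Fixpoint qpochR (a q : R) (n : nat) : R :=
  match n with
  | O => 1
  | S m => qpochR a q m * (1 - a * q ^ m)
  end.

Fixpoint qpochC (a : C) (q : R) (n : nat) : C :=
  match n with
  | O => RtoC 1
  | S m => Cmult (qpochC a q m) (Cminus (RtoC 1) (Cmult a (RtoC (q ^ m))))
  end.

Definition qpoch_inf_is (a : C) (q : R) (L : C) : Prop :=
  filterlim (fun n => qpochC a q n) eventually (locally L).

Definition tgamma (alpha beta q : R) (n : nat) : R :=
  (1 - alpha * q ^ n) / (1 - beta * q ^ n).

(* ppair n = (p_n(x), p_{n+1}(x)) for the monic polynomials
   p_{-1}=0, p_0=1, p_{n+1} = x p_n - tg_{n-1} tg_n p_{n-1}. *)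
Fixpoint ppair (alpha beta q : R) (x : C) (n : nat) : C * C :=
  match n with
  | O => (RtoC 1, x)
  | S m => let (a, b) := ppair alpha beta q x m in
           (b, Cminus (Cmult x b)
                      (Cmult (RtoC (tgamma alpha beta q m * tgamma alpha beta q (S m))) a))
  end.

Definition pnq (alpha beta q : R) (n : nat) (x : C) : C := fst (ppair alpha beta q x n).

(* The tau-free expression for (q^{-1} alpha)^k (q tau t, q tau^{-1} t; q)_k,
   given alpha (tau + tau^{-1}) = beta (z + z^{-1}):
   prod_{j<k} ( q^{-1} alpha (1 + q^{2j+2} t^2) - q^j t beta (z + z^{-1}) ). *)
Fixpoint tau_poch (alpha beta q : R) (z t : C) (k : nat) : C :=
  match k with
  | O => RtoC 1
  | S j => Cmult (tau_poch alpha beta q z t j)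
             (Cminus (Cmult (RtoC (alpha / q))
                            (Cplus (RtoC 1) (Cmult (RtoC (q ^ (2 * j + 2))) (Cmult t t))))
                     (Cmult (RtoC (q ^ j * beta)) (Cmult t (Cplus z (Cinv z)))))
  end.

(* k-th term of 3phi2(q, q tau t, q tau^{-1} t; q z t, q z^{-1} t; q, q^{-1} alpha):
   (q;q)_k (q tau t, q tau^{-1} t;q)_k (q^{-1}alpha)^k / ((q z t, q z^{-1} t, q; q)_k),
   the factor (q;q)_k cancelling. *)
Definition phi32_term (alpha beta q : R) (z t : C) (k : nat) : C :=
  Cdiv (tau_poch alpha beta q z t k)
       (Cmult (qpochC (Cmult (RtoC q) (Cmult z t)) q k)
              (qpochC (Cmult (RtoC q) (Cmult (Cinv z) t)) q k)).

Definition gen_term (alpha beta q : R) (z t : C) (n : nat) : C :=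
  Cmult (RtoC (qpochR beta q n / qpochR alpha q n))
        (Cmult (pnq alpha beta q n (Cplus z (Cinv z))) (Cpow t n)).

(* With x = z + 1/z and r_n = (be;q)_n/(al;q)_n p_n(x), the recurrence for p_n becomes
   r_{n+2} = g_{n+1} x r_{n+1} - r_n, where g_k = (1 - be q^k)/(1 - al q^k) tends to 1
   geometrically.  This is a perturbation of the recurrence solved by z^n and z^-n, so
   r_n = O(rho^n) for every rho > 1/|z|, and F(s) = sum r_n s^n converges for |s| <= |t|.
   The recurrence is equivalent to the q-difference equation
     F(s) (1 - zs)(1 - s/z) = (1 - al/q) + A(s) F(qs),  A(s) = (al/q)(1 + q^2 s^2) - be x s.
   Iterating it along s = q^j t gives
     F(t) = (1 - al/q) sum_{k<=n} P_k / D(q^k t) + P_{n+1} F(q^{n+1} t),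
   P_n = prod_{j<n} A(q^j t)/D(q^j t), and D(t) P_k / D(q^k t) is the k-th 3phi2 term.
   For |al| < q the ratios A/D tend to |al|/q < 1, so the remainder vanishes.  For al = q the
   constant term vanishes, A(s) = (1 - q tau s)(1 - q s/tau), and F(q^n t) -> 1. *)

From Stdlib Require Import Reals Lra Lia.
From Coquelicot Require Import Coquelicot.
Open Scope R_scope.

(* Phrased through real sequences so that the is_lim_seq library applies; see Clim_filterlim. *)
Definition Clim (u : nat -> C) (l : C) : Prop :=
  is_lim_seq (fun n => Cmod (u n - l)%C) 0.

Lemma Clim_filterlim (u : nat -> C) (l : C) :
  Clim u l <-> filterlim u eventually (locally l).
Proof.
  set (k := norm_factor (K := C_AbsRing) (V := C_NormedModule)).
  assert (Hk : 0 < k) by apply norm_factor_gt_0.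
  split; intros H.
  - apply filterlim_locally. intros eps.
    apply is_lim_seq_spec in H. destruct (H eps) as [N HN].
    exists N. intros n Hn. apply (@norm_compat1 C_AbsRing C_NormedModule).
    specialize (HN n Hn). rewrite Rminus_0_r, Rabs_pos_eq in HN by apply Cmod_ge_0.
    exact HN.
  - apply is_lim_seq_spec. intros eps.
    assert (He : 0 < eps / k) by (apply Rdiv_lt_0_compat; [apply cond_pos | exact Hk]).
    destruct (proj1 (filterlim_locally u l) H (mkposreal _ He)) as [N HN].
    exists N. intros n Hn.
    specialize (HN n Hn). apply (@norm_compat2 C_AbsRing C_NormedModule) in HN.
    rewrite Rminus_0_r, Rabs_pos_eq by apply Cmod_ge_0.
    change (Cmod (u n - l)%C < k * (eps / k)) in HN.
    replace (pos eps) with (k * (eps / k)) by (field; lra). exact HN.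
Qed.

Lemma Clim_unique (u : nat -> C) (a b : C) : Clim u a -> Clim u b -> a = b.
Proof.
  rewrite !Clim_filterlim. intros Ha Hb.
  exact (filterlim_locally_unique (K := C_AbsRing) (V := C_NormedModule) u a b Ha Hb).
Qed.

Lemma Clim_le (u : nat -> C) (l : C) (v : nat -> R) :
  (forall n, Cmod (u n - l)%C <= v n) -> is_lim_seq v 0 -> Clim u l.
Proof.
  intros H Hv.
  apply is_lim_seq_le_le with (u := fun _ => 0) (w := v); [|apply is_lim_seq_const | exact Hv].
  intros n. split; [apply Cmod_ge_0 | apply H].
Qed.

Lemma Clim_geom (u : nat -> C) (l : C) (K q : R) :
  0 <= q < 1 -> (forall n, Cmod (u n - l)%C <= K * q ^ n) -> Clim u l.
Proof.
  intros Hq H. apply (Clim_le _ _ _ H).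
  replace (Finite 0) with (Rbar_mult K 0) by (simpl; f_equal; ring).
  apply is_lim_seq_scal_l, is_lim_seq_geom. rewrite Rabs_pos_eq; lra.
Qed.

Lemma Clim_const (c : C) : Clim (fun _ => c) c.
Proof.
  apply (Clim_le _ _ (fun _ => 0)); [|apply is_lim_seq_const].
  intros n. replace (c - c)%C with (RtoC 0) by ring. rewrite Cmod_0. lra.
Qed.

Lemma Clim_S (u : nat -> C) (l : C) : Clim (fun n => u (S n)) l <-> Clim u l.
Proof.
  split; intros H.
  - now apply is_lim_seq_incr_1.
  - exact (proj1 (is_lim_seq_incr_1 (fun n => Cmod (u n - l)%C) 0) H).
Qed.

Lemma Clim_ext (u v : nat -> C) (l : C) :
  (forall n, u n = v n) -> Clim u l -> Clim v l.
Proof.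
  intros E H. apply (is_lim_seq_ext (fun n => Cmod (u n - l)%C)); [|exact H].
  intros n. now rewrite E.
Qed.

Lemma Cmod_reverse_triangle (a b : C) : Rabs (Cmod a - Cmod b) <= Cmod (a - b)%C.
Proof.
  assert (Cmod a <= Cmod (a - b)%C + Cmod b).
  { replace a with ((a - b) + b)%C at 1 by ring. apply Cmod_triangle. }
  assert (Cmod b <= Cmod (a - b)%C + Cmod a).
  { replace b with (- (a - b) + a)%C at 1 by ring. rewrite <- (Cmod_opp (a - b)%C).
    apply Cmod_triangle. }
  apply Rabs_le. lra.
Qed.

Lemma Clim_Cmod (u : nat -> C) (l : C) :
  Clim u l -> is_lim_seq (fun n => Cmod (u n)) (Cmod l).
Proof.
  intros H.
  apply is_lim_seq_le_le with (u := fun n => Cmod l - Cmod (u n - l)%C)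
                              (w := fun n => Cmod l + Cmod (u n - l)%C).
  - intros n. pose proof (Cmod_reverse_triangle (u n) l) as X.
    apply Rabs_le_between in X. lra.
  - replace (Finite (Cmod l)) with (Rbar_minus (Cmod l) 0) by (simpl; f_equal; ring).
    apply is_lim_seq_minus'; [apply is_lim_seq_const | exact H].
  - replace (Finite (Cmod l)) with (Rbar_plus (Cmod l) 0) by (simpl; f_equal; ring).
    apply is_lim_seq_plus'; [apply is_lim_seq_const | exact H].
Qed.

Lemma Clim_mult (u v : nat -> C) (a b : C) :
  Clim u a -> Clim v b -> Clim (fun n => u n * v n)%C (a * b)%C.
Proof.
  intros Hu Hv.
  apply (Clim_le _ _ (fun n => Cmod (u n - a)%C * Cmod (v n - b)%C
       + Cmod a * Cmod (v n - b)%C + Cmod b * Cmod (u n - a)%C)).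
  - intros n.
    replace (u n * v n - a * b)%C
      with ((u n - a) * (v n - b) + a * (v n - b) + b * (u n - a))%C by ring.
    eapply Rle_trans; [apply Cmod_triangle|]. rewrite !Cmod_mult.
    apply Rplus_le_compat_r. eapply Rle_trans; [apply Cmod_triangle|].
    rewrite !Cmod_mult. lra.
  - replace (Finite 0) with (Finite (0 * 0 + Cmod a * 0 + Cmod b * 0)) by (f_equal; ring).
    apply is_lim_seq_plus'; [apply is_lim_seq_plus'|].
    + now apply is_lim_seq_mult'.
    + exact (is_lim_seq_scal_l _ (Cmod a) 0 Hv).
    + exact (is_lim_seq_scal_l _ (Cmod b) 0 Hu).
Qed.

Lemma Clim_mult_bounded_0 (u v : nat -> C) (M : R) :
  Clim u 0 -> (forall n, Cmod (v n) <= M) -> Clim (fun n => u n * v n)%C 0.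
Proof.
  intros Hu Hv.
  apply (Clim_le _ _ (fun n => Cmod (u n - 0)%C * M)).
  - intros n. replace (u n * v n - 0)%C with ((u n - 0) * v n)%C by ring.
    rewrite Cmod_mult. apply Rmult_le_compat_l; [apply Cmod_ge_0 | apply Hv].
  - replace (Finite 0) with (Rbar_mult 0 M) by (simpl; f_equal; ring).
    now apply is_lim_seq_scal_r.
Qed.

(* The sum of a convergent series; an unspecified value otherwise. *)
Definition Cseries (a : nat -> C) : C :=
  @iota C_CompleteNormedModule (fun l => is_series a l).

Lemma Cseries_unique (a : nat -> C) (l : C) : is_series a l -> Cseries a = l.
Proof.
  intros H. exact (iota_filterlim_locally (K := C_AbsRing) (V := C_CompleteNormedModule) _ _ H).
Qed.

Lemma is_series_C_unique (a : nat -> C) (l l' : C) : is_series a l -> is_series a l' -> l = l'.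
Proof.
  intros H H'. exact (filterlim_locally_unique (K := C_AbsRing) (V := C_NormedModule) _ _ _ H H').
Qed.

Lemma Cmod_sum_n_le (a : nat -> C) (b : nat -> R) :
  (forall n, Cmod (a n) <= b n) -> forall N, Cmod (sum_n a N) <= sum_n b N.
Proof.
  intros H N. induction N.
  - rewrite !sum_O. apply H.
  - rewrite !sum_Sn. eapply Rle_trans; [apply (Cmod_triangle (sum_n a N) (a (S N)))|].
    specialize (H (S N)). change (plus (sum_n b N) (b (S N))) with (sum_n b N + b (S N)). lra.
Qed.

Lemma Cmod_series_le (a : nat -> C) (l : C) (b : nat -> R) (lb : R) :
  is_series a l -> (forall n, Cmod (a n) <= b n) -> is_series b lb -> Cmod l <= lb.
Proof.
  intros Ha Hab Hb. apply Clim_filterlim, Clim_Cmod in Ha.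
  exact (is_lim_seq_le _ _ (Cmod l) lb (Cmod_sum_n_le a b Hab) Ha Hb).
Qed.

Lemma is_series_Cext (a b : nat -> C) (l : C) :
  (forall n, a n = b n) -> is_series a l -> is_series b l.
Proof. exact (is_series_ext (K := C_AbsRing) (V := C_NormedModule) a b l). Qed.

Lemma is_series_Clin (u v : nat -> C) (lu lv c d : C) :
  is_series u lu -> is_series v lv ->
  is_series (fun n => c * u n + d * v n)%C (c * lu + d * lv)%C.
Proof.
  intros Hu Hv.
  exact (is_series_plus (K := C_AbsRing) (V := C_NormedModule) _ _ _ _
          (is_series_scal (K := C_AbsRing) (V := C_NormedModule) c u lu Hu)
          (is_series_scal (K := C_AbsRing) (V := C_NormedModule) d v lv Hv)).
Qed.

Definition shiftC (u : nat -> C) (n : nat) : C :=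
  match n with O => RtoC 0 | S m => u m end.

Lemma is_series_shiftC (u : nat -> C) (l : C) : is_series u l -> is_series (shiftC u) l.
Proof.
  intros H. apply (is_series_decr_1 (K := C_AbsRing) (V := C_NormedModule)).
  match goal with |- is_series _ ?l' => replace l' with l; [exact H|] end.
  change (l = l + - 0)%C. ring.
Qed.

Lemma is_series_delta0 (c : C) :
  is_series (fun n => match n with O => c | S _ => RtoC 0 end) c.
Proof.
  apply (filterlim_ext (fun _ => c)); [|apply filterlim_const].
  intros N. induction N as [|N IH]; [now rewrite sum_O|].
  rewrite sum_Sn, <- IH. change (c = c + 0)%C. ring.
Qed.

Lemma pow_unit_interval (q : R) (k : nat) : 0 < q < 1 -> 0 < q ^ k <= 1.
Proof.
  intros Hq. split; [now apply pow_lt|].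
  rewrite <- (pow1 k). apply pow_incr. lra.
Qed.

Lemma Cmod_pow_scale (q : R) (s : C) (k : nat) :
  0 < q < 1 -> Cmod (RtoC (q ^ k) * s)%C = q ^ k * Cmod s.
Proof.
  intros Hq. pose proof (pow_unit_interval q k Hq).
  rewrite Cmod_mult, Cmod_R, Rabs_pos_eq; lra.
Qed.

Lemma Cmod_pow_scale_le (q : R) (s : C) (k : nat) :
  0 < q < 1 -> Cmod (RtoC (q ^ k) * s)%C <= Cmod s.
Proof.
  intros Hq. rewrite Cmod_pow_scale by exact Hq.
  pose proof (pow_unit_interval q k Hq). pose proof (Cmod_ge_0 s). nra.
Qed.

Lemma Cminus_0_r (a : C) : (a - 0)%C = a.
Proof. ring. Qed.

Lemma Cmod_1_minus_ge (w : C) : 1 - Cmod w <= Cmod (1 - w)%C.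
Proof.
  pose proof (Cmod_reverse_triangle 1 w) as H. rewrite Cmod_1 in H.
  apply Rabs_le_between in H. lra.
Qed.

Lemma Cmod_1_minus_le (w : C) : Cmod (1 - w)%C <= 1 + Cmod w.
Proof. eapply Rle_trans; [apply Cmod_triangle|]. rewrite Cmod_opp, Cmod_1. lra. Qed.

Lemma pow_eventually_le (q c eps : R) :
  0 < q < 1 -> 0 <= c -> 0 < eps -> exists N, forall n, (N <= n)%nat -> c * q ^ n <= eps.
Proof.
  intros Hq Hc He.
  assert (Hy : 0 < eps / (c + 1)) by (apply Rdiv_lt_0_compat; lra).
  destruct (pow_lt_1_zero q ltac:(rewrite Rabs_pos_eq; lra) _ Hy) as [N HN].
  exists N. intros n Hn. specialize (HN n Hn). rewrite Rabs_pos_eq in HN by (apply pow_le; lra).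
  apply (Rmult_lt_compat_l (c + 1)) in HN; [|lra].
  replace ((c + 1) * (eps / (c + 1))) with eps in HN by (field; lra).
  pose proof (pow_unit_interval q n Hq). nra.
Qed.

Lemma pow_scale_sq_le (q c : R) (n : nat) :
  0 < q < 1 -> 0 <= c -> q ^ n * c * (q ^ n * c) <= q ^ n * c ^ 2.
Proof. intros Hq Hc. pose proof (pow_unit_interval q n Hq). simpl. nra. Qed.

Lemma one_sub_mul_pow_pos (a q : R) (k : nat) : 0 < q < 1 -> a < 1 -> 0 < 1 - a * q ^ k.
Proof.
  intros Hq Ha. pose proof (pow_unit_interval q k Hq).
  destruct (Rle_lt_dec a 0); nra.
Qed.

Lemma RtoC_one_sub_neq_0 (u : R) : u <> 1 -> (1 - RtoC u)%C <> RtoC 0.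
Proof. intros Hu E. rewrite <- RtoC_minus in E. apply RtoC_inj in E. lra. Qed.

Fixpoint cprod (f : nat -> C) (n : nat) : C :=
  match n with
  | O => RtoC 1
  | S m => (cprod f m * f m)%C
  end.

Lemma cprod_neq_0 (f : nat -> C) (n : nat) :
  (forall j, f j <> RtoC 0) -> cprod f n <> RtoC 0.
Proof.
  intros Hf. induction n as [|n IH]; simpl.
  - intros E. apply RtoC_inj in E. lra.
  - now apply Cmult_neq_0.
Qed.

Lemma cprod_div (f g : nat -> C) (n : nat) :
  (forall j, g j <> RtoC 0) ->
  cprod (fun j => f j / g j)%C n = (cprod f n / cprod g n)%C.
Proof.
  intros Hg. induction n as [|n IH]; simpl.
  - field.
  - rewrite IH. field. split; [apply Hg | now apply cprod_neq_0].
Qed.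

Lemma Clim_cprod_0 (f : nat -> C) (th : R) (N : nat) :
  0 <= th < 1 -> (forall n, (N <= n)%nat -> Cmod (f n) <= th) -> Clim (cprod f) 0.
Proof.
  intros Hth Hf. apply (is_lim_seq_incr_n _ N).
  apply (Clim_geom (fun k => cprod f (k + N)) 0 (Cmod (cprod f N)) th Hth).
  induction n as [|n IH]; simpl; rewrite Cminus_0_r; [lra|].
  rewrite Cminus_0_r in IH. rewrite Cmod_mult.
  replace (Cmod (cprod f N) * (th * th ^ n)) with (Cmod (cprod f N) * th ^ n * th) by ring.
  apply Rmult_le_compat; try apply Cmod_ge_0; [exact IH | apply Hf; lia].
Qed.

Section FirstOrderRecurrence.

Variables (F A D : nat -> C) (c : C).
Hypothesis D_neq_0 : forall j, D j <> RtoC 0.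
Hypothesis F_rec : forall j, (F j * D j = c + A j * F (S j))%C.

Let P := cprod (fun j => A j / D j)%C.

Lemma first_order_unroll (n : nat) :
  F 0%nat = (c * sum_n (fun k => P k / D k) n + P (S n) * F (S n))%C.
Proof.
  induction n as [|n IH].
  - rewrite sum_O. unfold P; simpl.
    replace (F 0%nat) with ((c + A 0%nat * F 1%nat) / D 0%nat)%C
      by (rewrite <- F_rec; field; apply D_neq_0).
    field. apply D_neq_0.
  - rewrite sum_Sn, IH. change (plus ?a ?b) with (Cplus a b).
    replace (F (S n)) with ((c + A (S n) * F (S (S n))) / D (S n))%C
      by (rewrite <- F_rec; field; apply D_neq_0).
    unfold P; simpl. field. split; apply D_neq_0.
Qed.

Lemma is_series_first_order_unroll (L : C) :
  Clim (fun n => P n * F n)%C L -> is_series (fun k => c * (P k / D k))%C (F 0%nat - L)%C.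
Proof.
  intros HL. apply Clim_filterlim. apply Clim_S in HL.
  apply (Clim_le _ _ (fun n => Cmod (P (S n) * F (S n) - L)%C)); [|exact HL].
  intros n. rewrite (first_order_unroll n).
  change (@sum_n (NormedModule.AbelianMonoid C_AbsRing C_NormedModule)
                 (fun k => c * (P k / D k))%C n)
    with (@sum_n C_Ring (fun k => mult c (P k / D k)%C) n).
  rewrite sum_n_mult_l. change (mult ?x ?y) with (Cmult x y).
  assert (Hcancel : forall u u' v : C, u = u' -> Cmod (u - (u' + v - L))%C = Cmod (v - L)%C).
  { intros u u' v ->. rewrite <- Cmod_opp. f_equal. ring. }
  rewrite Hcancel by reflexivity. lra.
Qed.

End FirstOrderRecurrence.

(** * q-Pochhammer symbols *)

Lemma qpochC_shift (a : C) (q : R) (n : nat) :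
  qpochC a q (S n) = ((1 - a) * qpochC (RtoC q * a) q n)%C.
Proof.
  induction n as [|n IH]; [simpl; ring|].
  change (qpochC a q (S (S n))) with (qpochC a q (S n) * (1 - a * RtoC (q ^ S n)))%C.
  rewrite IH. simpl. rewrite RtoC_mult. ring.
Qed.

Lemma qpochC_add (a : C) (q : R) (m n : nat) :
  qpochC a q (m + n) = (qpochC a q m * qpochC (a * RtoC (q ^ m)) q n)%C.
Proof.
  induction n as [|n IH].
  - rewrite Nat.add_0_r. simpl. ring.
  - rewrite Nat.add_succ_r. simpl. rewrite IH, pow_add, RtoC_mult. ring.
Qed.

Lemma qpochC_neq_0 (a : C) (q : R) (n : nat) :
  0 < q < 1 -> Cmod a < 1 -> qpochC a q n <> RtoC 0.
Proof.
  intros Hq Ha. induction n as [|n IH]; simpl.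
  - intros E. apply RtoC_inj in E. lra.
  - apply Cmult_neq_0; [exact IH|]. intros E.
    pose proof (Cmod_1_minus_ge (a * RtoC (q ^ n))%C) as X.
    rewrite E, Cmod_0, Cmult_comm, Cmod_pow_scale in X by exact Hq.
    pose proof (pow_unit_interval q n Hq). pose proof (Cmod_ge_0 a). nra.
Qed.

Lemma qpochC_bounded (a : C) (q : R) (n : nat) :
  0 < q < 1 -> Cmod (qpochC a q n) <= exp (Cmod a / (1 - q)).
Proof.
  intros Hq.
  assert (Hpartial : forall k, Cmod (qpochC a q k) <= exp (Cmod a * (1 - q ^ k) / (1 - q))).
  { induction k as [|k IH]; simpl.
    - rewrite Cmod_1. replace (Cmod a * (1 - 1) / (1 - q)) with 0 by (field; lra).
      rewrite exp_0. lra.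
    - rewrite Cmod_mult.
      replace (Cmod a * (1 - q * q ^ k) / (1 - q))
        with (Cmod a * (1 - q ^ k) / (1 - q) + Cmod a * q ^ k) by (field; lra).
      rewrite exp_plus. apply Rmult_le_compat; try apply Cmod_ge_0; [exact IH|].
      eapply Rle_trans; [apply Cmod_1_minus_le|].
      rewrite Cmult_comm, Cmod_pow_scale by exact Hq. rewrite Rmult_comm. apply exp_ineq1_le. }
  eapply Rle_trans; [apply Hpartial|].
  assert (Hle : Cmod a * (1 - q ^ n) / (1 - q) <= Cmod a / (1 - q)).
  { pose proof (pow_unit_interval q n Hq). pose proof (Cmod_ge_0 a).
    apply Rmult_le_compat_r; [apply Rlt_le, Rinv_0_lt_compat; lra | nra]. }
  destruct (Rle_lt_or_eq_dec _ _ Hle) as [Hlt | ->]; [|lra].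
  now apply Rlt_le, exp_increasing.
Qed.

Lemma qpochC_converges (a : C) (q : R) :
  0 < q < 1 -> exists L, Clim (qpochC a q) L.
Proof.
  intros Hq.
  set (M := exp (Cmod a / (1 - q))).
  set (d := fun k => (qpochC a q (S k) - qpochC a q k)%C).
  assert (Hd : forall k, Cmod (d k) <= M * Cmod a * q ^ k).
  { intros k. unfold d. simpl.
    replace (qpochC a q k * (1 - a * RtoC (q ^ k)) - qpochC a q k)%C
      with (- (qpochC a q k * (RtoC (q ^ k) * a)))%C by ring.
    rewrite Cmod_opp, Cmod_mult, Cmod_pow_scale by exact Hq.
    pose proof (pow_unit_interval q k Hq). pose proof (Cmod_ge_0 a).
    replace (M * Cmod a * q ^ k) with (M * (q ^ k * Cmod a)) by ring.
    apply Rmult_le_compat_r; [nra | apply qpochC_bounded, Hq]. }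
  destruct (ex_series_le (K := C_AbsRing) (V := C_CompleteNormedModule) d
              (fun k => M * Cmod a * q ^ k) Hd) as [l Hl].
  { exists (M * Cmod a * / (1 - q)).
    apply (is_series_scal_l (K := R_AbsRing) (V := R_NormedModule) (M * Cmod a)).
    apply is_series_geom. rewrite Rabs_pos_eq; lra. }
  assert (Hs : Clim (sum_n d) l) by (apply Clim_filterlim; exact Hl).
  exists (1 + l)%C. apply Clim_S.
  apply (Clim_ext (fun n => 1 + sum_n d n)%C).
  - intros n. induction n as [|n IH].
    + rewrite sum_O. unfold d. simpl. ring.
    + rewrite sum_Sn. change (plus ?x ?y) with (Cplus x y).
      replace (1 + (sum_n d n + d (S n)))%C with ((1 + sum_n d n) + d (S n))%C by ring.
      rewrite IH. unfold d. ring.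
  - eapply is_lim_seq_ext; [|exact Hs]. intros n. cbv beta. f_equal. ring.
Qed.

Lemma qpochC_Cmod_ge_half (b : C) (q : R) (n : nat) :
  0 < q < 1 -> Cmod b <= (1 - q) / 2 -> 1 / 2 <= Cmod (qpochC b q n).
Proof.
  intros Hq Hb. pose proof (Cmod_ge_0 b).
  (* Weierstrass product inequality *)
  assert (Hpartial : forall k,
            1 / 2 <= 1 - Cmod b * (1 - q ^ k) / (1 - q) <= Cmod (qpochC b q k)).
  { induction k as [|k IH]; simpl.
    - rewrite Cmod_1. replace (Cmod b * (1 - 1) / (1 - q)) with 0 by (field; lra). lra.
    - pose proof (pow_unit_interval q k Hq).
      set (L := 1 - Cmod b * (1 - q ^ k) / (1 - q)) in *.
      replace (1 - Cmod b * (1 - q * q ^ k) / (1 - q)) with (L - Cmod b * q ^ k)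
        by (unfold L; field; lra).
      assert (Hbq : 1 - Cmod b * q ^ k <= Cmod (1 - b * RtoC (q ^ k))%C).
      { eapply Rle_trans; [|apply Cmod_1_minus_ge].
        rewrite Cmult_comm, Cmod_pow_scale by exact Hq. lra. }
      assert (Hbn : 0 <= Cmod b * q ^ k <= Cmod b) by (split; nra).
      split.
      + assert (Cmod b * (1 - q * q ^ k) <= Cmod b) by nra.
        unfold L. apply (Rmult_le_reg_r (1 - q)); [lra|].
        replace ((1 - Cmod b * (1 - q ^ k) / (1 - q) - Cmod b * q ^ k) * (1 - q))
          with (1 - q - Cmod b * (1 - q * q ^ k)) by (field; lra). lra.
      + rewrite Cmod_mult.
        assert (L <= 1).
        { unfold L. assert (0 <= Cmod b * (1 - q ^ k) / (1 - q)); [|lra].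
          apply Rmult_le_pos; [nra | apply Rlt_le, Rinv_0_lt_compat; lra]. }
        assert (L * (1 - Cmod b * q ^ k) <= Cmod (qpochC b q k) * Cmod (1 - b * RtoC (q ^ k))%C)
          by (apply Rmult_le_compat; lra).
        nra. }
  specialize (Hpartial n). lra.
Qed.

Lemma qpochC_lim_neq_0 (a : C) (q : R) (L : C) :
  0 < q < 1 -> Cmod a < 1 -> Clim (qpochC a q) L -> L <> RtoC 0.
Proof.
  intros Hq Ha HL.
  destruct (pow_eventually_le q (Cmod a) ((1 - q) / 2) Hq (Cmod_ge_0 a)) as [m Hm]; [lra|].
  assert (Htail : Cmod (a * RtoC (q ^ m))%C <= (1 - q) / 2).
  { rewrite Cmult_comm, Cmod_pow_scale, Rmult_comm by exact Hq. now apply Hm. }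
  assert (Hlow : forall n, Cmod (qpochC a q m) / 2 <= Cmod (qpochC a q (n + m))).
  { intros n. rewrite Nat.add_comm, qpochC_add, Cmod_mult.
    pose proof (qpochC_Cmod_ge_half _ q n Hq Htail). pose proof (Cmod_ge_0 (qpochC a q m)).
    nra. }
  apply Clim_Cmod, (is_lim_seq_incr_n _ m) in HL.
  pose proof (is_lim_seq_le _ _ _ _ Hlow (is_lim_seq_const _) HL) as X. simpl in X.
  assert (0 < Cmod (qpochC a q m)) by now apply Cmod_gt_0, qpochC_neq_0.
  intros E. rewrite E, Cmod_0 in X. lra.
Qed.

Lemma qpochR_neq_0 (a q : R) (n : nat) : 0 < q < 1 -> a < 1 -> qpochR a q n <> 0.
Proof.
  intros Hq Ha. induction n as [|n IH]; simpl; [lra|].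
  apply Rmult_integral_contrapositive_currified; [exact IH|].
  pose proof (one_sub_mul_pow_pos a q n Hq Ha). lra.
Qed.

(** * Geometric growth of perturbed Chebyshev recurrences *)

Lemma geometric_bound_shift (u : nat -> R) (N : nat) (K rho : R) :
  0 < rho -> (forall n, u (N + n)%nat <= K * rho ^ n) ->
  exists K', forall n, u n <= K' * rho ^ n.
Proof.
  intros Hrho. revert u K. induction N as [|N IH]; intros u K Hu; [now exists K|].
  destruct (IH (fun n => u (S n)) K Hu) as [K' HK'].
  exists (Rmax (u 0%nat) (K' / rho)). intros [|n]; simpl.
  - rewrite Rmult_1_r. apply Rmax_l.
  - eapply Rle_trans; [apply HK'|].
    replace (K' * rho ^ n) with (K' / rho * (rho * rho ^ n)) by (field; lra).
    apply Rmult_le_compat_r; [|apply Rmax_r].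
    pose proof (pow_lt rho n Hrho). nra.
Qed.

Section CoupledGrowth.

Variables (a b eps : nat -> R) (w m rho : R).
Hypothesis w_range : 0 <= w < rho.
Hypothesis m_range : 0 <= m < rho.
Hypothesis eps_small : forall n, 0 <= eps n /\ eps n * (rho / (rho - m)) <= rho - w.
Hypothesis a_step : forall n, a (S n) <= w * a n + eps n * b n.
Hypothesis b_step : forall n, b (S n) <= a (S n) + m * b n.

Lemma coupled_geometric_bound : exists E, forall n, b n <= E * rho ^ n.
Proof.
  set (L := rho / (rho - m)).
  assert (HL : L * (rho - m) = rho) by (unfold L; field; lra).
  assert (HL0 : 0 < L) by (unfold L; apply Rdiv_lt_0_compat; lra).
  set (E := Rabs (a 0%nat) + Rabs (b 0%nat) / L).
  assert (HE : 0 <= E).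
  { unfold E. pose proof (Rabs_pos (a 0%nat)). pose proof (Rabs_pos (b 0%nat)).
    apply Rplus_le_le_0_compat; [lra | apply Rdiv_le_0_compat; lra]. }
  assert (Inv : forall n, a n <= E * rho ^ n /\ b n <= E * L * rho ^ n).
  { induction n as [|n [IA IB]]; simpl.
    - pose proof (Rle_abs (a 0%nat)). pose proof (Rle_abs (b 0%nat)).
      assert (Rabs (b 0%nat) = Rabs (b 0%nat) / L * L) by (field; lra).
      unfold E. pose proof (Rabs_pos (b 0%nat)). pose proof (Rabs_pos (a 0%nat)).
      assert (0 <= Rabs (b 0%nat) / L) by (apply Rdiv_le_0_compat; lra). nra.
    - pose proof (pow_lt rho n ltac:(lra)) as Hp. destruct (eps_small n) as [He0 He].
      assert (HaS : a (S n) <= E * (rho * rho ^ n)).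
      { eapply Rle_trans; [apply a_step|].
        assert (w * a n <= w * (E * rho ^ n)) by (apply Rmult_le_compat_l; lra).
        assert (eps n * b n <= eps n * (E * L * rho ^ n)) by (apply Rmult_le_compat_l; lra).
        assert (E * rho ^ n * (w + eps n * L) <= E * rho ^ n * rho)
          by (apply Rmult_le_compat_l; [nra | fold L in He; lra]).
        nra. }
      split; [exact HaS|].
      eapply Rle_trans; [apply b_step|].
      assert (m * b n <= m * (E * L * rho ^ n)) by (apply Rmult_le_compat_l; lra).
      replace (E * L * (rho * rho ^ n)) with (E * (rho * rho ^ n) + m * (E * L * rho ^ n))
        by (rewrite <- HL at 1; ring).
      lra. }
  exists (E * L). intros n. apply Inv.
Qed.

End CoupledGrowth.

Lemma perturbed_chebyshev_growth (z : C) (r : nat -> C) (g : nat -> R) (K q rho : R) :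
  z <> RtoC 0 -> Cmod z < 1 -> 0 < q < 1 -> / Cmod z < rho ->
  (forall k, Rabs (g k - 1) <= K * q ^ k) ->
  (forall n, r (S (S n)) = (RtoC (g (S n)) * (z + / z) * r (S n) - r n)%C) ->
  exists M, forall n, Cmod (r n) <= M * rho ^ n.
Proof.
  intros Hz Hz1 Hq Hrho Hg Hr.
  set (x := (z + / z)%C).
  set (e := fun n => (r (S n) - z * r n)%C).
  assert (Hzm : 0 < Cmod z) by now apply Cmod_gt_0.
  assert (Hw : 1 < / Cmod z) by (rewrite <- Rinv_1; apply Rinv_lt_contravar; lra).
  assert (HK : 0 <= K).
  { pose proof (Hg 0%nat) as H0. simpl in H0. pose proof (Rabs_pos (g 0%nat - 1)). lra. }
  (* e n kills the decaying solution z^n of the unperturbed recurrence and is multiplied by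
     1/z at each step, up to the perturbation *)
  assert (He : forall n, e (S n) = (/ z * e n + x * RtoC (g (S n) - 1) * r (S n))%C).
  { intros n. unfold e. rewrite Hr. unfold x. rewrite RtoC_minus. field. exact Hz. }
  set (c := Cmod x * K).
  assert (Hc : 0 <= c) by (apply Rmult_le_pos; [apply Cmod_ge_0 | exact HK]).
  destruct (pow_eventually_le q (c * (rho / (rho - Cmod z))) (rho - / Cmod z) Hq)
    as [N HN].
  { apply Rmult_le_pos; [exact Hc | apply Rdiv_le_0_compat; lra]. }
  { lra. }
  destruct (coupled_geometric_bound (fun n => Cmod (e (N + n)%nat))
              (fun n => Cmod (r (S (N + n))))
              (fun n => c * q ^ S (N + n)) (/ Cmod z) (Cmod z) rho)
    as [E HE].
  - lra.
  - lra.
  - intros n. pose proof (pow_unit_interval q (S (N + n)) Hq). split; [nra|].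
    replace (c * q ^ S (N + n) * (rho / (rho - Cmod z)))
      with (c * (rho / (rho - Cmod z)) * q ^ S (N + n)) by ring.
    apply HN. lia.
  - intros n. rewrite Nat.add_succ_r, He, <- Cmod_inv by exact Hz.
    eapply Rle_trans; [apply Cmod_triangle|]. rewrite !Cmod_mult, Cmod_R.
    apply Rplus_le_compat_l, Rmult_le_compat_r; [apply Cmod_ge_0|].
    unfold c. rewrite Rmult_assoc. apply Rmult_le_compat_l; [apply Cmod_ge_0 | apply Hg].
  - intros n. rewrite Nat.add_succ_r.
    replace (r (S (S (N + n)))) with (e (S (N + n)) + z * r (S (N + n)))%C by (unfold e; ring).
    eapply Rle_trans; [apply Cmod_triangle|]. rewrite Cmod_mult. lra.
  - apply (geometric_bound_shift (fun n => Cmod (r n)) (S N) E rho); [lra|].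
    exact HE.
Qed.

Lemma power_series_near_1 (r : nat -> C) (M rho sigma : R) (s : C) :
  r 0%nat = RtoC 1 -> 0 < rho -> 0 <= sigma -> rho * sigma < 1 ->
  (forall n, Cmod (r n) <= M * rho ^ n) -> Cmod s <= sigma ->
  exists F, is_series (fun n => r n * Cpow s n)%C F /\
            Cmod (F - 1)%C <= M * rho / (1 - rho * sigma) * Cmod s.
Proof.
  intros Hr0 Hrho Hsig Hrs Hr Hs.
  set (b := fun k => M * rho * (rho * sigma) ^ k).
  assert (Hb : is_series b (M * rho / (1 - rho * sigma))).
  { apply (is_series_scal_l (K := R_AbsRing) (V := R_NormedModule) (M * rho)).
    apply is_series_geom. rewrite Rabs_pos_eq; nra. }
  set (tail := fun k => (r (S k) * Cpow s k)%C).
  assert (Htail : forall k, Cmod (tail k) <= b k).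
  { intros k. unfold tail, b. rewrite Cmod_mult, Cmod_pow, Rpow_mult_distr.
    replace (M * rho * (rho ^ k * sigma ^ k)) with (M * rho ^ S k * sigma ^ k) by (simpl; ring).
    apply Rmult_le_compat; try apply Cmod_ge_0; try apply pow_le; try apply Cmod_ge_0.
    - apply Hr.
    - apply pow_incr. split; [apply Cmod_ge_0 | exact Hs]. }
  destruct (ex_series_le (K := C_AbsRing) (V := C_CompleteNormedModule) tail b Htail)
    as [G HG]; [eexists; exact Hb|].
  exists (1 + s * G)%C. split.
  - apply (is_series_decr_1 (K := C_AbsRing) (V := C_NormedModule)).
    apply (is_series_ext (K := C_AbsRing) (V := C_NormedModule) (fun k => scal s (tail k))).
    { intros n. unfold tail. change (s * (r (S n) * Cpow s n) = r (S n) * (s * Cpow s n))%C. ring. }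
    match goal with |- is_series _ ?l => replace l with (scal s G) end.
    + exact (is_series_scal (K := C_AbsRing) (V := C_NormedModule) s tail G HG).
    + rewrite Hr0. change (s * G = 1 + s * G + - (1 * 1))%C. ring.
  - replace (1 + s * G - 1)%C with (s * G)%C by ring. rewrite Cmod_mult, Rmult_comm.
    apply Rmult_le_compat_r; [apply Cmod_ge_0|].
    exact (Cmod_series_le tail G b _ HG Htail Hb).
Qed.

(** * The generating series and its q-difference equation *)

Definition qratio (al be q : R) (k : nat) : R := (1 - be * q ^ k) / (1 - al * q ^ k).

Lemma qratio_sub_1_le (al be q : R) (k : nat) :
  0 < q < 1 -> Rabs al < 1 ->
  Rabs (qratio al be q k - 1) <= Rabs (al - be) / (1 - Rabs al) * q ^ k.
Proof.
  intros Hq Hal. pose proof (pow_unit_interval q k Hq).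
  assert (Hden : 1 - Rabs al <= 1 - al * q ^ k).
  { pose proof (Rle_abs al). pose proof (Rle_abs (- al)). rewrite Rabs_Ropp in *. nra. }
  unfold qratio.
  replace ((1 - be * q ^ k) / (1 - al * q ^ k) - 1) with ((al - be) * q ^ k / (1 - al * q ^ k))
    by (field; lra).
  rewrite Rabs_div, Rabs_mult, (Rabs_pos_eq (q ^ k)), (Rabs_pos_eq (1 - al * q ^ k)) by lra.
  unfold Rdiv. replace (Rabs (al - be) * / (1 - Rabs al) * q ^ k)
    with (Rabs (al - be) * q ^ k * / (1 - Rabs al)) by ring.
  apply Rmult_le_compat_l; [pose proof (Rabs_pos (al - be)); nra|].
  apply Rinv_le_contravar; lra.
Qed.

Definition gen_coef (al be q : R) (z : C) (n : nat) : C :=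
  (RtoC (qpochR be q n / qpochR al q n) * pnq al be q n (z + / z))%C.

Lemma gen_term_gen_coef (al be q : R) (z t : C) (n : nat) :
  gen_term al be q z t n = (gen_coef al be q z n * Cpow t n)%C.
Proof. unfold gen_term, gen_coef. ring. Qed.

Lemma gen_coef_0 (al be q : R) (z : C) : gen_coef al be q z 0 = RtoC 1.
Proof. unfold gen_coef, pnq. simpl. rewrite Rdiv_1_l, Rinv_1. ring. Qed.

Definition qdiff_A (al be q : R) (z s : C) : C :=
  (RtoC (al / q) * (1 + RtoC (q ^ 2) * (s * s)) - RtoC be * (s * (z + / z)))%C.

Definition qdiff_D (z s : C) : C := ((1 - z * s) * (1 - / z * s))%C.

Definition gen_series (al be q : R) (z s : C) : C :=
  Cseries (fun n => gen_coef al be q z n * Cpow s n)%C.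

Section GeneratingSeries.

Variables (al be q : R) (z : C).
Hypothesis q_range : 0 < q < 1.
Hypothesis al_range : Rabs al < 1.
Hypothesis be_lt_1 : be < 1.
Hypothesis z_neq_0 : z <> RtoC 0.

Let al_lt_1 : al < 1.
Proof. pose proof (Rle_abs al). lra. Qed.

Lemma gen_coef_1 : gen_coef al be q z 1 = (RtoC ((1 - be) / (1 - al)) * (z + / z))%C.
Proof. unfold gen_coef, pnq. simpl. f_equal. f_equal. field. lra. Qed.

(* the normalisation (be;q)_n/(al;q)_n turns the three-term recurrence into a perturbation of
   r_{n+2} = (z + 1/z) r_{n+1} - r_n *)
Lemma gen_coef_rec (n : nat) :
  gen_coef al be q z (S (S n)) =
  (RtoC (qratio al be q (S n)) * (z + / z) * gen_coef al be q z (S n) - gen_coef al be q z n)%C.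
Proof.
  set (c := fun n => qpochR be q n / qpochR al q n).
  pose proof (qpochR_neq_0 al q n q_range al_lt_1).
  pose proof (qpochR_neq_0 be q n q_range be_lt_1).
  pose proof (one_sub_mul_pow_pos al q n q_range al_lt_1).
  pose proof (one_sub_mul_pow_pos al q (S n) q_range al_lt_1).
  pose proof (one_sub_mul_pow_pos be q n q_range be_lt_1).
  pose proof (one_sub_mul_pow_pos be q (S n) q_range be_lt_1).
  assert (E1 : c (S (S n)) = qratio al be q (S n) * c (S n)).
  { unfold c, qratio. simpl in *. field. lra. }
  assert (E2 : c (S (S n)) * (tgamma al be q n * tgamma al be q (S n)) = c n).
  { unfold c, tgamma. simpl in *. field. lra. }
  unfold gen_coef, pnq. fold (c (S (S n))) (c (S n)) (c n). simpl.
  destruct (ppair al be q (z + / z) n) as [p0 p1]. simpl.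
  rewrite <- E2, E1, !RtoC_mult. ring.
Qed.

Lemma gen_series_qdifference (s Fs Fqs : C) :
  is_series (fun n => gen_coef al be q z n * Cpow s n)%C Fs ->
  is_series (fun n => gen_coef al be q z n * Cpow (RtoC q * s) n)%C Fqs ->
  (Fs * qdiff_D z s = RtoC (1 - al / q) + qdiff_A al be q z s * Fqs)%C.
Proof.
  intros HF HFq.
  set (r := gen_coef al be q z) in *.
  set (x := (z + / z)%C).
  set (a := RtoC (al / q)).
  set (A := fun n => (r n * Cpow s n)%C) in HF.
  set (B := fun n => (r n * Cpow (RtoC q * s) n)%C) in HFq.
  assert (Hq0 : RtoC q <> RtoC 0) by (intros E; apply RtoC_inj in E; lra).
  assert (Ha : a = (RtoC al / RtoC q)%C) by (unfold a; apply RtoC_div; lra).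
  (* T is F(s) D(s) - A(s) F(qs) expanded in powers of s; by the recurrence only the
     constant term survives *)
  pose proof (is_series_Clin A B Fs Fqs 1 (- a) HF HFq) as T0.
  pose proof (is_series_shiftC _ _
                (is_series_Clin A B Fs Fqs (- (x * s)) (RtoC be * x * s) HF HFq)) as T1.
  pose proof (is_series_shiftC _ _ (is_series_shiftC _ _
                (is_series_Clin A B Fs Fqs (s * s) (- (a * RtoC (q ^ 2) * s * s)) HF HFq))) as T2.
  pose proof (is_series_Clin _ _ _ _ 1 1 T0 (is_series_Clin _ _ _ _ 1 1 T1 T2)) as T.
  apply (is_series_Cext _ (fun n => match n with O => RtoC (1 - al / q) | S _ => RtoC 0 end)) in T.
  - rewrite <- (is_series_C_unique _ _ _ T (is_series_delta0 _)).
    unfold qdiff_D, qdiff_A. fold a. unfold x. field. exact z_neq_0.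
  - unfold A, B. rewrite Ha.
    intros [|[|m]]; simpl shiftC; rewrite ?Cpow_mult_l, ?Cpow_S; simpl Cpow.
    + unfold r. rewrite gen_coef_0, RtoC_minus, RtoC_div by lra. field. exact Hq0.
    + unfold r. rewrite gen_coef_0, gen_coef_1. rewrite RtoC_div, !RtoC_minus by lra.
      unfold x. field. repeat split; [exact z_neq_0 | | exact Hq0].
      apply RtoC_one_sub_neq_0. lra.
    + pose proof (one_sub_mul_pow_pos al q (S m) q_range al_lt_1) as Hal.
      unfold r. rewrite gen_coef_rec. unfold qratio.
      rewrite RtoC_div, !RtoC_minus, !RtoC_mult, !RtoC_pow by lra.
      simpl Cpow. unfold x. field. repeat split; [exact Hq0 | exact z_neq_0|].
      cbv beta. rewrite <- RtoC_pow, <- !RtoC_mult. apply RtoC_one_sub_neq_0.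
      simpl in Hal. lra.
Qed.

Hypothesis z_lt_1 : Cmod z < 1.

Lemma gen_coef_geometric (rho : R) :
  / Cmod z < rho -> exists M, forall n, Cmod (gen_coef al be q z n) <= M * rho ^ n.
Proof.
  intros Hrho.
  apply (perturbed_chebyshev_growth z _ (qratio al be q) (Rabs (al - be) / (1 - Rabs al)) q rho);
    try assumption.
  - intros k. now apply qratio_sub_1_le.
  - exact gen_coef_rec.
Qed.

Lemma gen_series_near_1 (t : C) :
  Cmod t < Cmod z -> exists B, forall s, Cmod s <= Cmod t ->
    is_series (fun n => gen_coef al be q z n * Cpow s n)%C (gen_series al be q z s) /\
    Cmod (gen_series al be q z s - 1)%C <= B * Cmod s.
Proof.
  intros Htz.
  pose proof (Cmod_ge_0 t) as Ht0. assert (Hzm : 0 < Cmod z) by lra.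
  set (rho := 2 / (Cmod z + Cmod t)).
  assert (Hrho : 0 < rho) by (unfold rho; apply Rdiv_lt_0_compat; lra).
  assert (Hrt : rho * Cmod t < 1)
    by (unfold rho; apply (Rmult_lt_reg_r (Cmod z + Cmod t)); [lra|]; field_simplify; lra).
  assert (Hrz : / Cmod z < rho).
  { apply (Rmult_lt_reg_r (Cmod z)); [lra|]. rewrite Rinv_l by lra.
    unfold rho. apply (Rmult_lt_reg_r (Cmod z + Cmod t)); [lra|]. field_simplify; nra. }
  destruct (gen_coef_geometric rho Hrz) as [M HM].
  exists (M * rho / (1 - rho * Cmod t)). intros s Hs.
  destruct (power_series_near_1 _ M rho (Cmod t) s (gen_coef_0 al be q z) Hrho Ht0 Hrt HM Hs)
    as [F [HF HF1]].
  unfold gen_series. rewrite (Cseries_unique _ _ HF). now split.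
Qed.

End GeneratingSeries.

(** * Iterating the q-difference equation *)

Lemma qdiff_D_cprod (q : R) (z t : C) (n : nat) :
  (qpochC (z * t) q n * qpochC (/ z * t) q n =
   cprod (fun j => qdiff_D z (RtoC (q ^ j) * t)) n)%C.
Proof.
  induction n as [|n IH]; simpl; [ring|].
  rewrite <- IH. unfold qdiff_D. ring.
Qed.

Lemma tau_poch_cprod (al be q : R) (z t : C) (n : nat) :
  tau_poch al be q z t n = cprod (fun j => qdiff_A al be q z (RtoC (q ^ j) * t)) n.
Proof.
  induction n as [|n IH]; [reflexivity|].
  cbn [tau_poch cprod]. rewrite IH. f_equal. unfold qdiff_A.
  replace (q ^ (2 * n + 2)) with (q ^ 2 * (q ^ n * q ^ n))
    by (replace (2 * n + 2)%nat with (2 + (n + n))%nat by lia; rewrite !pow_add; ring).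
  rewrite !RtoC_mult. ring.
Qed.

Lemma qdiff_D_neq_0 (z s : C) :
  Cmod (z * s)%C < 1 -> Cmod (/ z * s)%C < 1 -> qdiff_D z s <> RtoC 0.
Proof.
  intros Hzs Hws. unfold qdiff_D.
  apply Cmult_neq_0; intros E; apply Ceq_minus in E; [rewrite <- E in Hzs | rewrite <- E in Hws];
    rewrite Cmod_1 in *; lra.
Qed.

Lemma phi32_term_cprod (al be q : R) (z t : C) (k : nat) :
  (forall j, qdiff_D z (RtoC (q ^ j) * t) <> RtoC 0) ->
  phi32_term al be q z t k =
  (qdiff_D z t * cprod (fun j => qdiff_A al be q z (RtoC (q ^ j) * t)
                                  / qdiff_D z (RtoC (q ^ j) * t)) k
   / qdiff_D z (RtoC (q ^ k) * t))%C.
Proof.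
  intros HD.
  assert (HD0 : qdiff_D z t <> RtoC 0) by (specialize (HD 0%nat); now rewrite Cmult_1_l in HD).
  assert (Hshift :
    (qdiff_D z t * (qpochC (RtoC q * (z * t)) q k * qpochC (RtoC q * (/ z * t)) q k) =
     cprod (fun j => qdiff_D z (RtoC (q ^ j) * t)) (S k))%C).
  { rewrite <- qdiff_D_cprod, !qpochC_shift. unfold qdiff_D. ring. }
  simpl cprod at 1 in Hshift.
  pose proof (cprod_neq_0 _ k HD) as Hprod.
  assert (HZW : (qpochC (RtoC q * (z * t)) q k * qpochC (RtoC q * (/ z * t)) q k)%C <> RtoC 0).
  { intros E. rewrite E, Cmult_0_r in Hshift. symmetry in Hshift.
    exact (Cmult_neq_0 _ _ Hprod (HD k) Hshift). }
  unfold phi32_term. rewrite cprod_div, tau_poch_cprod by exact HD.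
  set (T := cprod _ k). set (Pd := cprod _ k) in *.
  set (Dk := qdiff_D z (RtoC (q ^ k) * t)) in *. set (D0 := qdiff_D z t) in *.
  replace (D0 * (T / Pd) / Dk)%C with (D0 * T / (Pd * Dk))%C
    by (field; split; [exact Hprod | exact (HD k)]).
  rewrite <- Hshift. field.
  repeat split; [intros E; apply HZW; rewrite E; ring .. | exact HD0].
Qed.

Lemma qdiff_A_lim (al be q : R) (z t : C) :
  0 < q < 1 -> Clim (fun n => qdiff_A al be q z (RtoC (q ^ n) * t)) (RtoC (al / q)).
Proof.
  intros Hq.
  apply (Clim_geom _ _ (Rabs (al / q) * q ^ 2 * Cmod t ^ 2 + Rabs be * Cmod (z + / z) * Cmod t) q);
    [lra|].
  intros n. unfold qdiff_A.
  set (s := (RtoC (q ^ n) * t)%C).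
  replace (RtoC (al / q) * (1 + RtoC (q ^ 2) * (s * s)) - RtoC be * (s * (z + / z))
           - RtoC (al / q))%C
    with (RtoC (al / q) * RtoC (q ^ 2) * (s * s) - RtoC be * (z + / z) * s)%C by ring.
  eapply Rle_trans; [apply Cmod_triangle|]. rewrite Cmod_opp, !Cmod_mult, !Cmod_R.
  unfold s. rewrite !Cmod_pow_scale by exact Hq.
  pose proof (Cmod_ge_0 t) as Ht. pose proof (pow_scale_sq_le q _ n Hq Ht).
  pose proof (pow_unit_interval q n Hq).
  pose proof (Rabs_pos (al / q)). pose proof (Rabs_pos be). pose proof (Cmod_ge_0 (z + / z)).
  assert (0 <= q ^ 2) by (apply pow_le; lra). rewrite (Rabs_pos_eq (q ^ 2)) by lra.
  assert (0 <= Rabs (al / q) * q ^ 2) by nra.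
  assert (0 <= Rabs be * Cmod (z + / z)) by nra.
  nra.
Qed.

Lemma qdiff_D_lim (q : R) (z t : C) :
  0 < q < 1 -> z <> RtoC 0 -> Clim (fun n => qdiff_D z (RtoC (q ^ n) * t)) (RtoC 1).
Proof.
  intros Hq Hz.
  apply (Clim_geom _ _ (Cmod t ^ 2 + Cmod (z + / z) * Cmod t) q); [lra|].
  intros n. unfold qdiff_D.
  set (s := (RtoC (q ^ n) * t)%C).
  replace ((1 - z * s) * (1 - / z * s) - 1)%C with (s * s - (z + / z) * s)%C
    by (field; exact Hz).
  eapply Rle_trans; [apply Cmod_triangle|]. rewrite Cmod_opp, !Cmod_mult.
  unfold s. rewrite !Cmod_pow_scale by exact Hq.
  pose proof (Cmod_ge_0 t) as Ht. pose proof (pow_scale_sq_le q _ n Hq Ht).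
  pose proof (pow_unit_interval q n Hq). pose proof (Cmod_ge_0 (z + / z)). nra.
Qed.

Lemma cprod_qdiff_ratio_lim_0 (al be q : R) (z t : C) :
  0 < q < 1 -> Rabs al < q -> z <> RtoC 0 ->
  (forall j, qdiff_D z (RtoC (q ^ j) * t) <> RtoC 0) ->
  Clim (cprod (fun j => qdiff_A al be q z (RtoC (q ^ j) * t) / qdiff_D z (RtoC (q ^ j) * t)))%C 0.
Proof.
  intros Hq Hal Hz HD.
  set (l := Rabs al / q).
  assert (Hl : 0 <= l < 1).
  { unfold l. split; [apply Rdiv_le_0_compat; [apply Rabs_pos | lra]|].
    apply (Rmult_lt_reg_r q); [lra|]. field_simplify; lra. }
  assert (Hratio : is_lim_seq (fun n => Cmod (qdiff_A al be q z (RtoC (q ^ n) * t))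
                                      / Cmod (qdiff_D z (RtoC (q ^ n) * t))) l).
  { replace l with (Cmod (RtoC (al / q)) / Cmod (RtoC 1))
      by (unfold l; rewrite !Cmod_R, Rabs_R1, Rabs_div, (Rabs_pos_eq q); lra).
    apply is_lim_seq_div'; [apply Clim_Cmod, qdiff_A_lim; lra
                          | apply Clim_Cmod, qdiff_D_lim; assumption
                          | rewrite Cmod_1; lra]. }
  apply is_lim_seq_spec in Hratio.
  destruct (Hratio (mkposreal ((1 - l) / 2) ltac:(lra))) as [N HN].
  apply (Clim_cprod_0 _ ((1 + l) / 2) N); [lra|].
  intros n Hn. rewrite Cmod_div by apply HD.
  specialize (HN n Hn). simpl in HN. apply Rabs_lt_between' in HN. lra.
Qed.

Lemma qdiff_A_factor (be q : R) (z tau s : C) :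
  q <> 0 -> tau <> RtoC 0 ->
  (RtoC q * (tau + / tau) = RtoC be * (z + / z))%C ->
  qdiff_A q be q z s = ((1 - RtoC q * tau * s) * (1 - RtoC q * / tau * s))%C.
Proof.
  intros Hq Htau Hrel. unfold qdiff_A.
  replace (RtoC be * (s * (z + / z)))%C with (s * (RtoC be * (z + / z)))%C by ring.
  rewrite <- Hrel, RtoC_pow, RtoC_div by exact Hq.
  field. split; [exact Htau | intros E; apply RtoC_inj in E; lra].
Qed.

Lemma cprod_qdiff_A_factor (be q : R) (z t tau : C) (n : nat) :
  q <> 0 -> tau <> RtoC 0 ->
  (RtoC q * (tau + / tau) = RtoC be * (z + / z))%C ->
  cprod (fun j => qdiff_A q be q z (RtoC (q ^ j) * t)) n =
  (qpochC (RtoC q * (tau * t)) q n * qpochC (RtoC q * (/ tau * t)) q n)%C.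
Proof.
  intros Hq Htau Hrel. induction n as [|n IH]; simpl; [ring|].
  rewrite IH, (qdiff_A_factor be q z tau) by assumption. ring.
Qed.

Section IteratedQDifference.

Variables (al be q : R) (z t : C).
Hypothesis q_range : 0 < q < 1.
Hypothesis al_range : Rabs al < 1.
Hypothesis be_lt_1 : be < 1.
Hypothesis t_lt_z : Cmod t < Cmod z.
Hypothesis z_lt_1 : Cmod z < 1.

Let F (j : nat) : C := gen_series al be q z (RtoC (q ^ j) * t).
Let A (j : nat) : C := qdiff_A al be q z (RtoC (q ^ j) * t).
Let D (j : nat) : C := qdiff_D z (RtoC (q ^ j) * t).

Let z_neq_0 : z <> RtoC 0.
Proof. apply Cmod_gt_0. pose proof (Cmod_ge_0 t). lra. Qed.

Lemma Cmod_zt_lt_1 : Cmod (z * t)%C < 1.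
Proof.
  rewrite Cmod_mult. pose proof (Cmod_ge_0 t). pose proof (Cmod_ge_0 z). nra.
Qed.

Lemma Cmod_inv_zt_lt_1 : Cmod (/ z * t)%C < 1.
Proof.
  pose proof (proj1 (Cmod_gt_0 z) z_neq_0).
  rewrite Cmod_mult, Cmod_inv by exact z_neq_0.
  apply (Rmult_lt_reg_l (Cmod z)); [lra|]. field_simplify; lra.
Qed.

Lemma qdiff_D_iter_neq_0 (j : nat) : D j <> RtoC 0.
Proof.
  unfold D. apply qdiff_D_neq_0.
  - replace (z * (RtoC (q ^ j) * t))%C with (RtoC (q ^ j) * (z * t))%C by ring.
    pose proof (Cmod_pow_scale_le q (z * t) j q_range). pose proof Cmod_zt_lt_1. lra.
  - replace (/ z * (RtoC (q ^ j) * t))%C with (RtoC (q ^ j) * (/ z * t))%C by ring.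
    pose proof (Cmod_pow_scale_le q (/ z * t) j q_range). pose proof Cmod_inv_zt_lt_1. lra.
Qed.

Lemma gen_series_iter_near_1 :
  exists B, forall j, Cmod (F j - 1)%C <= B * Cmod t * q ^ j.
Proof.
  destruct (gen_series_near_1 al be q z q_range al_range be_lt_1 z_neq_0 z_lt_1 t t_lt_z)
    as [B HB].
  exists B. intros j. unfold F.
  destruct (HB _ (Cmod_pow_scale_le q t j q_range)) as [_ Hj].
  rewrite Cmod_pow_scale in Hj by exact q_range. lra.
Qed.

Lemma gen_series_iter_rec (j : nat) : (F j * D j = RtoC (1 - al / q) + A j * F (S j))%C.
Proof.
  destruct (gen_series_near_1 al be q z q_range al_range be_lt_1 z_neq_0 z_lt_1 t t_lt_z)
    as [B HB].
  unfold F, A, D. apply gen_series_qdifference; try assumption.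
  - apply HB, Cmod_pow_scale_le, q_range.
  - replace (RtoC q * (RtoC (q ^ j) * t))%C with (RtoC (q ^ S j) * t)%C
      by (simpl; rewrite RtoC_mult; ring).
    apply HB, Cmod_pow_scale_le, q_range.
Qed.

Lemma is_series_gen_term : is_series (gen_term al be q z t) (F 0%nat).
Proof.
  destruct (gen_series_near_1 al be q z q_range al_range be_lt_1 z_neq_0 z_lt_1 t t_lt_z)
    as [B HB].
  apply (is_series_Cext _ _ _ (fun n => eq_sym (gen_term_gen_coef _ _ _ _ _ n))).
  unfold F. simpl pow. rewrite Cmult_1_l. apply HB. lra.
Qed.

Lemma gen_series_3phi2 :
  Rabs al < q ->
  exists S, is_series (phi32_term al be q z t) S /\
            F 0%nat = (RtoC (1 - al / q) / qdiff_D z t * S)%C.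
Proof.
  intros Hal.
  destruct gen_series_iter_near_1 as [B HB].
  assert (Hlim : Clim (fun n => cprod (fun j => A j / D j) n * F n)%C 0).
  { apply (Clim_mult_bounded_0 _ _ (1 + B * Cmod t)).
    - exact (cprod_qdiff_ratio_lim_0 al be q z t q_range Hal z_neq_0 qdiff_D_iter_neq_0).
    - intros n. specialize (HB n). pose proof (pow_unit_interval q n q_range).
      assert (0 <= B * Cmod t) by (pose proof (Cmod_ge_0 (F n - 1)%C); nra).
      replace (F n) with ((F n - 1) + 1)%C by ring.
      eapply Rle_trans; [apply Cmod_triangle|]. rewrite Cmod_1. nra. }
  assert (Hc : RtoC (1 - al / q) <> RtoC 0).
  { intros E. apply RtoC_inj in E. apply (f_equal (Rmult q)) in E.
    field_simplify in E; [|lra]. pose proof (Rle_abs al). lra. }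
  pose proof (is_series_first_order_unroll F A D _ qdiff_D_iter_neq_0 gen_series_iter_rec 0 Hlim)
    as Hunroll.
  apply (is_series_scal (K := C_AbsRing) (V := C_NormedModule)
           (qdiff_D z t / RtoC (1 - al / q))%C) in Hunroll.
  apply (is_series_Cext _ (phi32_term al be q z t)) in Hunroll.
  - eexists. split; [exact Hunroll|]. change (scal ?a ?b) with (Cmult a b). rewrite Cminus_0_r.
    pose proof (qdiff_D_iter_neq_0 0) as HD0. unfold D in HD0. rewrite Cmult_1_l in HD0.
    field. split; assumption.
  - intros k. rewrite phi32_term_cprod by exact qdiff_D_iter_neq_0.
    change (scal ?a ?b) with (Cmult a b). unfold A, D.
    field. split; [apply qdiff_D_iter_neq_0 | exact Hc].
Qed.

Lemma gen_series_qpoch_product (tau N1 N2 D1 D2 : C) :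
  al = q -> tau <> RtoC 0 -> (RtoC q * (tau + / tau) = RtoC be * (z + / z))%C ->
  Clim (qpochC (RtoC q * (tau * t)) q) N1 -> Clim (qpochC (RtoC q * (/ tau * t)) q) N2 ->
  Clim (qpochC (z * t) q) D1 -> Clim (qpochC (/ z * t) q) D2 ->
  F 0%nat = (N1 * N2 / (D1 * D2))%C.
Proof.
  intros Hal Htau Hrel HN1 HN2 HD1 HD2.
  pose proof (qpochC_lim_neq_0 _ q D1 q_range Cmod_zt_lt_1 HD1).
  pose proof (qpochC_lim_neq_0 _ q D2 q_range Cmod_inv_zt_lt_1 HD2).
  enough (E : (F 0%nat * (D1 * D2) = N1 * N2)%C) by (rewrite <- E; field; split; assumption).
  assert (Hq0 : q <> 0) by lra.
  (* for al = q the constant term 1 - al/q vanishes and the unrolled equation is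
     F 0 = P (S n) F (S n) *)
  assert (Hiter : forall n,
    (F 0%nat * (qpochC (z * t) q (S n) * qpochC (/ z * t) q (S n)) =
     qpochC (RtoC q * (tau * t)) q (S n) * qpochC (RtoC q * (/ tau * t)) q (S n) * F (S n))%C).
  { intros n.
    rewrite (first_order_unroll F A D _ qdiff_D_iter_neq_0 gen_series_iter_rec n).
    rewrite cprod_div by exact qdiff_D_iter_neq_0. unfold A, D. rewrite Hal.
    replace (1 - q / q) with 0 by (field; exact Hq0).
    rewrite Cmult_0_l, Cplus_0_l, (cprod_qdiff_A_factor be q z t tau), qdiff_D_cprod
      by assumption.
    pose proof (cprod_neq_0 _ (S n) qdiff_D_iter_neq_0) as HP.
    field. exact HP. }
  destruct gen_series_iter_near_1 as [B HB].
  assert (HF : Clim (fun n => F (S n)) (RtoC 1)).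
  { apply Clim_S, (Clim_geom _ _ (B * Cmod t) q); [lra | exact HB]. }
  apply (Clim_unique (fun n => F 0%nat * (qpochC (z * t) q (S n) * qpochC (/ z * t) q (S n)))%C).
  - apply Clim_mult; [apply Clim_const | apply Clim_mult; apply Clim_S; assumption].
  - rewrite <- (Cmult_1_r (N1 * N2)).
    apply (Clim_ext _ _ _ (fun n => eq_sym (Hiter n))).
    apply Clim_mult; [apply Clim_mult; apply Clim_S; assumption | exact HF].
Qed.

End IteratedQDifference.

Theorem theorem2p16 (q beta : R) (t z : C) :
  0 < q < 1 -> beta < 1 -> Cmod t < Cmod z -> Cmod z < 1 ->
  (* (1): alpha real, |alpha| < q; tau enters only via alpha(tau+1/tau)=beta(z+1/z) *)
  (forall alpha : R, Rabs alpha < q ->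
     exists S : C,
       is_series (phi32_term alpha beta q z t) S /\
       is_series (gen_term alpha beta q z t)
         (Cmult (Cdiv (RtoC (1 - alpha / q))
                      (Cmult (Cminus (RtoC 1) (Cmult z t))
                             (Cminus (RtoC 1) (Cmult (Cinv z) t)))) S)) /\
  (* (2): alpha = q *)
  (forall tau : C, tau <> RtoC 0 ->
     Cmult (RtoC q) (Cplus tau (Cinv tau)) = Cmult (RtoC beta) (Cplus z (Cinv z)) ->
     exists N1 N2 D1 D2 : C,
       qpoch_inf_is (Cmult (RtoC q) (Cmult tau t)) q N1 /\
       qpoch_inf_is (Cmult (RtoC q) (Cmult (Cinv tau) t)) q N2 /\
       qpoch_inf_is (Cmult z t) q D1 /\
       qpoch_inf_is (Cmult (Cinv z) t) q D2 /\
       is_series (gen_term q beta q z t) (Cdiv (Cmult N1 N2) (Cmult D1 D2))).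
Proof.
  intros Hq Hbe Htz Hz. split.
  - intros al Hal.
    assert (Hal1 : Rabs al < 1) by lra.
    destruct (gen_series_3phi2 al beta q z t Hq Hal1 Hbe Htz Hz Hal) as [S [HS HF]].
    exists S. split; [exact HS|]. unfold qdiff_D in HF. rewrite <- HF.
    exact (is_series_gen_term al beta q z t Hq Hal1 Hbe Htz Hz).
  - intros tau Htau Hrel.
    assert (Hq1 : Rabs q < 1) by (rewrite Rabs_pos_eq; lra).
    destruct (qpochC_converges (RtoC q * (tau * t)) q Hq) as [N1 HN1].
    destruct (qpochC_converges (RtoC q * (/ tau * t)) q Hq) as [N2 HN2].
    destruct (qpochC_converges (z * t) q Hq) as [D1 HD1].
    destruct (qpochC_converges (/ z * t) q Hq) as [D2 HD2].
    exists N1, N2, D1, D2. unfold qpoch_inf_is. rewrite <- !Clim_filterlim.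
    repeat split; try assumption.
    rewrite <- (gen_series_qpoch_product q beta q z t Hq Hq1 Hbe Htz Hz tau N1 N2 D1 D2)
      by (reflexivity || assumption).
    exact (is_series_gen_term q beta q z t Hq Hq1 Hbe Htz Hz).
Qed.
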